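(* For every integer $n\ge 2$, $C^0_{L_n}=1+2\cos\big(\frac{\pi}{n+1}\big)$.
   Context: $L_n$ is the path graph with vertices $\{1,\dots,n\}$ and edges $\{j,j+1\}$, $1\le j\le n-1$, with the graph distance. A measure $\mu$ on $L_n$ is a weight function $\mu:\{1,\dots,n\}\to(0,\infty)$, $\mu(A)=\sum_{v\in A}\mu(v)$. Closed balls: $B(x,r)=\{y:|x-y|\le r\}$. $C^0_\mu=\max_{1\le x\le n}\mu(B(x,1))/\mu(x)$ and $C^0_{L_n}=\inf_\mu C^0_\mu$ over all such measures. *)

From Stdlib Require Import Reals Lra Lia List Arith.
Import ListNotations.
Open Scope R_scope.

Definition vertices (n : nat) : list nat := seq 1 n.

Definition path_dist (x y : nat) : nat := ((x - y) + (y - x))%nat.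

Definition ball (n x r : nat) : list nat :=
  filter (fun y => Nat.leb (path_dist x y) r) (vertices n).

(* mu(A) = sum_{v in A} mu(v), A given as a duplicate-free list. *)
Definition measure_of (mu : nat -> R) (A : list nat) : R :=
  fold_right Rplus 0 (map mu A).

(* A measure on L_n: positive weights on the vertices 1..n
   (values of mu outside 1..n are irrelevant). *)
Definition is_measure (n : nat) (mu : nat -> R) : Prop :=
  forall v : nat, (1 <= v <= n)%nat -> 0 < mu v.

(* C^0_mu = max_{1<=x<=n} mu(B(x,1)) / mu(x).  All ratios are >= 1 > 0,
   so folding Rmax from 0 gives the maximum for n >= 1. *)
Definition C0_mu (n : nat) (mu : nat -> R) : R :=
  fold_right Rmax 0 (map (fun x => measure_of mu (ball n x 1) / mu x) (vertices n)).

Definition is_infimum (E : R -> Prop) (m : R) : Prop :=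
  (forall c, E c -> m <= c) /\ (forall b, (forall c, E c -> b <= c) -> b <= m).

(* The set { C^0_mu : mu a measure on L_n }; C^0_{L_n} is its infimum. *)
Definition C0_values (n : nat) : R -> Prop :=
  fun c => exists mu : nat -> R, is_measure n mu /\ c = C0_mu n mu.

(* The sine vector s(k) = sin(k pi / (n + 1)) is a positive eigenvector, with
   eigenvalue c = 1 + 2 cos(pi / (n + 1)), of the operator mu |-> mu(B(., 1)),
   which is symmetric because the graph distance is.  Taking mu = s gives
   C^0_s = c.  For any measure mu, pairing the inequalities
   mu(B(x, 1)) <= C^0_mu mu(x) against s(x) and using the symmetry gives
   c sum_x s(x) mu(x) <= C^0_mu sum_x s(x) mu(x), hence c <= C^0_mu. *)

From Stdlib Require Import Reals Lra Lia List Arith.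
Import ListNotations.
Open Scope R_scope.

Lemma measure_of_nil f : measure_of f [] = 0.
Proof. reflexivity. Qed.

Lemma measure_of_cons f a A : measure_of f (a :: A) = f a + measure_of f A.
Proof. reflexivity. Qed.

Lemma measure_of_app f A B : measure_of f (A ++ B) = measure_of f A + measure_of f B.
Proof.
  induction A as [|a A IH]; cbn [app].
  - rewrite measure_of_nil; lra.
  - rewrite !measure_of_cons, IH; lra.
Qed.

Lemma measure_of_ext f g A :
  (forall v, In v A -> f v = g v) -> measure_of f A = measure_of g A.
Proof.
  induction A as [|a A IH]; intros Hfg; [reflexivity|].
  rewrite !measure_of_cons, Hfg by (simpl; auto).
  rewrite IH; [reflexivity|]. intros v Hv; apply Hfg; simpl; auto.
Qed.

Lemma measure_of_add f g A :
  measure_of (fun v => f v + g v) A = measure_of f A + measure_of g A.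
Proof.
  induction A as [|a A IH]; [rewrite !measure_of_nil; lra|].
  rewrite !measure_of_cons, IH; lra.
Qed.

Lemma measure_of_scal a f A :
  measure_of (fun v => a * f v) A = a * measure_of f A.
Proof.
  induction A as [|b A IH]; [rewrite !measure_of_nil; lra|].
  rewrite !measure_of_cons, IH; lra.
Qed.

Lemma measure_of_le f g A :
  (forall v, In v A -> f v <= g v) -> measure_of f A <= measure_of g A.
Proof.
  induction A as [|a A IH]; intros Hfg; [apply Rle_refl|].
  rewrite !measure_of_cons. apply Rplus_le_compat; [apply Hfg; simpl; auto|].
  apply IH; intros v Hv; apply Hfg; simpl; auto.
Qed.

Lemma measure_of_pos f A :
  A <> [] -> (forall v, In v A -> 0 < f v) -> 0 < measure_of f A.
Proof.
  induction A as [|a A IH]; intros Hne Hf; [congruence|].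
  rewrite measure_of_cons.
  assert (Ha : 0 < f a) by (apply Hf; simpl; auto).
  destruct A as [|b A]; [rewrite measure_of_nil; lra|].
  assert (0 < measure_of f (b :: A)).
  { apply IH; [congruence|]. intros v Hv; apply Hf; simpl in *; auto. }
  lra.
Qed.

Lemma measure_of_filter f P A :
  measure_of f (filter P A) = measure_of (fun v => if P v then f v else 0) A.
Proof.
  induction A as [|a A IH]; [reflexivity|].
  simpl filter. rewrite measure_of_cons, <- IH.
  destruct (P a); rewrite ?measure_of_cons; lra.
Qed.

Lemma measure_of_exchange (F : nat -> nat -> R) A B :
  measure_of (fun x => measure_of (fun y => F x y) B) A
  = measure_of (fun y => measure_of (fun x => F x y) A) B.
Proof.
  induction A as [|a A IH].
  - rewrite measure_of_nil. symmetry.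
    induction B as [|b B IHB]; [reflexivity|].
    rewrite measure_of_cons, IHB, measure_of_nil; lra.
  - rewrite measure_of_cons, IH, <- measure_of_add.
    apply measure_of_ext; intros y _. now rewrite measure_of_cons.
Qed.
Lemma fold_Rmax_ge l r : In r l -> r <= fold_right Rmax 0 l.
Proof.
  induction l as [|a l IH]; simpl; [tauto|]. intros [<- | Hr].
  - apply Rmax_l.
  - eapply Rle_trans; [apply IH, Hr | apply Rmax_r].
Qed.

Lemma fold_Rmax_const l c :
  0 <= c -> l <> [] -> (forall r, In r l -> r = c) -> fold_right Rmax 0 l = c.
Proof.
  intros Hc. induction l as [|a l IH]; intros Hne Hl; [congruence|]. simpl.
  rewrite (Hl a) by (simpl; auto).
  destruct l as [|b l]; [apply Rmax_left; auto|].
  rewrite IH; [apply Rmax_left; lra | congruence |].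
  intros r Hr; apply Hl; simpl in *; auto.
Qed.

Lemma path_dist_sym x y : path_dist x y = path_dist y x.
Proof. unfold path_dist; lia. Qed.

Lemma in_vertices n v : In v (vertices n) <-> (1 <= v <= n)%nat.
Proof. unfold vertices; rewrite in_seq; lia. Qed.

Lemma vertices_nonempty n : (1 <= n)%nat -> vertices n <> [].
Proof.
  intros Hn Hnil. assert (Hin : In 1%nat (vertices n)) by (apply in_vertices; lia).
  rewrite Hnil in Hin. destruct Hin.
Qed.

Lemma in_ball_center n x r : (1 <= x <= n)%nat -> In x (ball n x r).
Proof.
  intros Hx. unfold ball. apply filter_In. split; [now apply in_vertices|].
  apply Nat.leb_le. unfold path_dist; lia.
Qed.

Lemma measure_of_ball_sym n r f g :
  measure_of (fun x => f x * measure_of g (ball n x r)) (vertices n)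
  = measure_of (fun y => g y * measure_of f (ball n y r)) (vertices n).
Proof.
  unfold ball.
  transitivity (measure_of (fun x => measure_of (fun y =>
    if path_dist x y <=? r then f x * g y else 0) (vertices n)) (vertices n)).
  - apply measure_of_ext; intros x _.
    rewrite measure_of_filter, <- measure_of_scal.
    apply measure_of_ext; intros y _. destruct (path_dist x y <=? r); ring.
  - rewrite measure_of_exchange. apply measure_of_ext; intros y _.
    rewrite measure_of_filter, <- measure_of_scal.
    apply measure_of_ext; intros x _. rewrite path_dist_sym.
    destruct (path_dist y x <=? r); ring.
Qed.

Lemma filter_seq_unit_ball x a k :
  (a + 1 <= x)%nat -> (x + 2 <= a + k)%nat ->
  filter (fun y => path_dist x y <=? 1) (seq a k) = [x - 1; x; x + 1]%nat.
Proof.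
  intros Ha Hk.
  replace k with ((x - 1 - a) + (3 + (a + k - x - 2)))%nat by lia.
  rewrite !seq_app, !filter_app.
  replace (a + (x - 1 - a))%nat with (x - 1)%nat by lia.
  rewrite (filter_ext_in _ (fun _ => false) (seq a _)), filter_false.
  2: { intros y Hy. apply in_seq in Hy. apply Nat.leb_gt. unfold path_dist; lia. }
  rewrite (filter_ext_in _ (fun _ => false) (seq (x - 1 + 3) _)), filter_false.
  2: { intros y Hy. apply in_seq in Hy. apply Nat.leb_gt. unfold path_dist; lia. }
  rewrite (filter_ext_in _ (fun _ => true) (seq (x - 1) 3)), filter_true.
  2: { intros y Hy. apply in_seq in Hy. apply Nat.leb_le. unfold path_dist; lia. }
  simpl. repeat f_equal; lia.
Qed.

Lemma measure_of_unit_ball n f x :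
  (1 <= x <= n)%nat -> f 0%nat = 0 -> f (S n) = 0 ->
  measure_of f (ball n x 1) = f (x - 1)%nat + f x + f (x + 1)%nat.
Proof.
  intros Hx Hf0 HfSn.
  (* Padding the vertex list with the zeros of f at 0 and n + 1 turns every
     unit ball into the full window [x - 1; x; x + 1]. *)
  assert (Hseq : seq 0 (S (S n)) = 0%nat :: vertices n ++ [S n]).
  { unfold vertices. now rewrite <- cons_seq, seq_S. }
  pose proof (filter_seq_unit_ball x 0 (S (S n)) ltac:(lia) ltac:(lia)) as Hwin.
  rewrite Hseq in Hwin.
  apply (f_equal (measure_of f)) in Hwin.
  unfold ball. rewrite measure_of_filter.
  rewrite measure_of_filter, measure_of_cons, measure_of_app, measure_of_cons,
    measure_of_nil, Hf0, HfSn in Hwin.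
  rewrite !measure_of_cons, measure_of_nil in Hwin.
  destruct (path_dist x 0 <=? 1), (path_dist x (S n) <=? 1); lra.
Qed.

Lemma ball_measure_le_C0_mu n mu x :
  is_measure n mu -> (1 <= x <= n)%nat ->
  measure_of mu (ball n x 1) <= C0_mu n mu * mu x.
Proof.
  intros Hmu Hx. pose proof (Hmu x Hx) as Hpos.
  assert (Hratio : measure_of mu (ball n x 1) / mu x <= C0_mu n mu).
  { apply fold_Rmax_ge, in_map_iff. exists x. split; [reflexivity|].
    now apply in_vertices. }
  apply (Rmult_le_compat_r (mu x)) in Hratio; [|lra].
  unfold Rdiv in Hratio. rewrite Rmult_assoc, Rinv_l in Hratio; lra.
Qed.

Section PositiveEigenvector.

Variables (n : nat) (s : nat -> R) (c : R).
Hypothesis n_pos : (1 <= n)%nat.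
Hypothesis s_pos : is_measure n s.
Hypothesis s_eigen :
  forall x, (1 <= x <= n)%nat -> measure_of s (ball n x 1) = c * s x.

Lemma eigenvalue_pos : 0 < c.
Proof.
  assert (Hx : (1 <= 1 <= n)%nat) by lia.
  assert (Hball : 0 < measure_of s (ball n 1 1)).
  { apply measure_of_pos.
    - intros Hnil. pose proof (in_ball_center n 1 1 Hx) as Hin.
      rewrite Hnil in Hin. destruct Hin.
    - intros v Hv. unfold ball in Hv. apply filter_In in Hv as [Hv _].
      now apply s_pos, in_vertices. }
  rewrite s_eigen in Hball by exact Hx.
  pose proof (s_pos 1%nat Hx). nra.
Qed.

Lemma C0_mu_eigenvector : C0_mu n s = c.
Proof.
  unfold C0_mu. apply fold_Rmax_const.
  - pose proof eigenvalue_pos; lra.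
  - intros Hnil. apply map_eq_nil in Hnil. exact (vertices_nonempty n n_pos Hnil).
  - intros r Hr. apply in_map_iff in Hr as [x [<- Hx]]. apply in_vertices in Hx.
    rewrite s_eigen by exact Hx. pose proof (s_pos x Hx). field; lra.
Qed.

Lemma eigenvalue_le_C0_mu mu : is_measure n mu -> c <= C0_mu n mu.
Proof.
  intros Hmu.
  assert (Hpair : 0 < measure_of (fun x => s x * mu x) (vertices n)).
  { apply measure_of_pos; [exact (vertices_nonempty n n_pos)|].
    intros x Hx. apply in_vertices in Hx.
    apply Rmult_lt_0_compat; [apply s_pos | apply Hmu]; exact Hx. }
  assert (Hsym : c * measure_of (fun x => s x * mu x) (vertices n)
                 = measure_of (fun x => s x * measure_of mu (ball n x 1)) (vertices n)).
  { rewrite measure_of_ball_sym, <- measure_of_scal.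
    apply measure_of_ext. intros y Hy. apply in_vertices in Hy.
    rewrite s_eigen by exact Hy. ring. }
  assert (Hbound : measure_of (fun x => s x * measure_of mu (ball n x 1)) (vertices n)
                   <= C0_mu n mu * measure_of (fun x => s x * mu x) (vertices n)).
  { rewrite <- measure_of_scal. apply measure_of_le. intros x Hx.
    apply in_vertices in Hx. pose proof (s_pos x Hx).
    pose proof (ball_measure_le_C0_mu n mu x Hmu Hx). nra. }
  apply (Rmult_le_reg_r _ _ _ Hpair). lra.
Qed.

Lemma eigenvalue_is_infimum : is_infimum (C0_values n) c.
Proof.
  split.
  - intros r [mu [Hmu ->]]. now apply eigenvalue_le_C0_mu.
  - intros b Hb. apply Hb. exists s. split; [exact s_pos|].
    symmetry; exact C0_mu_eigenvector.
Qed.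

End PositiveEigenvector.

Lemma sin_three_term t u :
  sin (u - t) + sin u + sin (u + t) = (1 + 2 * cos t) * sin u.
Proof. rewrite sin_minus, sin_plus. ring. Qed.

Definition path_sine (n k : nat) : R := sin (INR k * (PI / (INR n + 1))).

Lemma path_sine_pos n : is_measure n (path_sine n).
Proof.
  intros k Hk. unfold path_sine.
  pose proof PI_RGT_0. pose proof (pos_INR n).
  assert (1 <= INR k) by (apply (le_INR 1); lia).
  assert (INR k <= INR n) by (apply le_INR; lia).
  assert (Hstep : 0 < PI / (INR n + 1)) by (apply Rdiv_lt_0_compat; lra).
  apply sin_gt_0.
  - apply Rmult_lt_0_compat; lra.
  - replace PI with ((INR n + 1) * (PI / (INR n + 1))) at 2 by (field; lra).
    apply Rmult_lt_compat_r; lra.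
Qed.

Lemma path_sine_0 n : path_sine n 0 = 0.
Proof. unfold path_sine. rewrite Rmult_0_l. apply sin_0. Qed.

Lemma path_sine_end n : path_sine n (S n) = 0.
Proof.
  unfold path_sine. rewrite S_INR. pose proof (pos_INR n).
  replace ((INR n + 1) * (PI / (INR n + 1))) with PI by (field; lra). apply sin_PI.
Qed.

Lemma path_sine_eigen n x : (1 <= x <= n)%nat ->
  measure_of (path_sine n) (ball n x 1)
  = (1 + 2 * cos (PI / (INR n + 1))) * path_sine n x.
Proof.
  intros Hx. rewrite measure_of_unit_ball by auto using path_sine_0, path_sine_end.
  unfold path_sine. rewrite minus_INR, plus_INR by lia. simpl INR.
  rewrite <- sin_three_term. f_equal; [f_equal|]; f_equal; ring.
Qed.

Theorem theorem3p7 (n : nat) (hn : (2 <= n)%nat) :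
  is_infimum (C0_values n) (1 + 2 * cos (PI / (INR n + 1))).
Proof.
  apply (eigenvalue_is_infimum n (path_sine n)).
  - lia.
  - apply path_sine_pos.
  - apply path_sine_eigen.
Qed.
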